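(* Let $\mu_\xi,\mu_\rho\in\mathbb{R}$, $\sigma_\xi>0$, $\sigma_\rho>0$, and $\kappa_\rho=\mu_\rho+\sigma_\rho^2/2$. Let $\delta>0$. The equation $$(\sigma_\xi^2+\sigma_\rho^2x^2)f''(x)+2(\mu_\xi+\kappa_\rho x)f'(x)-2\delta f(x)=0$$ admits a solution $f:\mathbb{R}_+\to\mathbb{R}$ satisfying property (P): $f(x)>0$ for all $x\in\mathbb{R}_+$ and $f'(x)\le0$ for all $x\in(0,\infty)$. Moreover, if $\mu_\rho\le0$, every other solution $\tilde f$ of this equation satisfying (P) is of the form $\tilde f=Kf$ on $\mathbb{R}_+$ for some constant $K>0$.
   Context: $\mathbb{R}_+=[0,\infty)$. *)

From Stdlib Require Import Reals Lra.
Open Scope R_scope.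

(* Derivative of f at x within R_+ = [0, +oo): l is the limit of
   (f y - f x)/(y - x) as y -> x with y in R_+, y <> x.
   At x = 0 this is the right derivative; at x > 0 the usual derivative. *)
Definition deriv_Rplus (f : R -> R) (x l : R) : Prop :=
  forall eps : R, 0 < eps -> exists dlt : R, 0 < dlt /\
    forall y : R, 0 <= y -> y <> x -> Rabs (y - x) < dlt ->
      Rabs ((f y - f x) / (y - x) - l) < eps.

(* f : R_+ -> R (values of f on negative reals are irrelevant) is a solution
   on R_+ of
   (s_xi^2 + s_rho^2 x^2) f''(x) + 2 (mu_xi + kappa_rho x) f'(x) - 2 delta f(x) = 0,
   with kappa_rho = mu_rho + s_rho^2/2; f1, f2 are f', f''. *)
Definition is_solution (mu_xi mu_rho s_xi s_rho delta : R) (f : R -> R) : Prop :=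
  exists f1 f2 : R -> R,
    forall x : R, 0 <= x ->
      deriv_Rplus f x (f1 x) /\ deriv_Rplus f1 x (f2 x) /\
      (s_xi ^ 2 + s_rho ^ 2 * x ^ 2) * f2 x
        + 2 * (mu_xi + (mu_rho + s_rho ^ 2 / 2) * x) * f1 x
        - 2 * delta * f x = 0.

Definition propP (f : R -> R) : Prop :=
  (forall x : R, 0 <= x -> 0 < f x) /\
  (forall x l : R, 0 < x -> deriv_Rplus f x l -> l <= 0).

From Stdlib Require Import Reals Lra Lia.
From Coquelicot Require Import Coquelicot.
Open Scope R_scope.

(* Write the equation as (a + b x^2) f'' + 2 (c + k x) f' - 2 d f = 0, with a = s_xi^2,
   b = s_rho^2, c = mu_xi, k = kappa_rho and d = delta.

   Existence: let p > 0 solve b p^2 + 2 mu_rho p = 2 d, and let h > 0 solve the first-order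
   equation (a + b s^2) h' = - (q s + 2 c) h with q = 2 p b + 2 mu_rho + b. Then
   f x = int_0^oo u^p h (x + u) du is a solution: applying the operator under the integral
   sign, the integrand u^p (...)(x + u) is the u-derivative of u^(p+1) R (x, x + u) for an
   explicit R, and this boundary term vanishes at 0 and, because h decays like s^(-q/b) with
   q/b > p + 1, at infinity. Since h > 0, f is positive and nonincreasing.

   Uniqueness: a solution with property (P) is bounded by its value at 0. If f and g are
   bounded solutions, W = g - (g 0 / f 0) f is a bounded solution with W 0 = 0, and W = 0 by
   a maximum principle: W - eps (A + ln (1 + x)) is negative at 0 and near infinity, and it
   cannot have a positive interior maximum since A + ln (1 + x) is a strict supersolution. *)

(** * One-sided derivatives on R_+ *)

Lemma deriv_Rplus_of_derivable_pt_lim f x l :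
  derivable_pt_lim f x l -> deriv_Rplus f x l.
Proof.
  intros H eps Heps. destruct (H eps Heps) as [d Hd].
  exists d; split; [apply cond_pos|]. intros y _ Hyx Hy.
  specialize (Hd (y - x) ltac:(lra) Hy).
  replace (x + (y - x)) with y in Hd by ring. exact Hd.
Qed.

Lemma derivable_pt_lim_of_deriv_Rplus f x l :
  0 < x -> deriv_Rplus f x l -> derivable_pt_lim f x l.
Proof.
  intros Hx H eps Heps. destruct (H eps Heps) as [d [Hd Hf]].
  exists (mkposreal _ (Rmin_pos d x Hd Hx)). intros h Hh Hhd; simpl in Hhd.
  pose proof (Rmin_l d x). pose proof (Rmin_r d x).
  apply Rabs_def2 in Hhd as Hhx.
  specialize (Hf (x + h) ltac:(lra) ltac:(lra)).
  replace (x + h - x) with h in Hf by ring. apply Hf. lra.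
Qed.

Lemma deriv_Rplus_comb f g h x l1 l2 al be :
  (forall y, h y = al * f y + be * g y) ->
  deriv_Rplus f x l1 -> deriv_Rplus g x l2 -> deriv_Rplus h x (al * l1 + be * l2).
Proof.
  intros Eh Hf Hg eps Heps.
  set (M := Rabs al + Rabs be + 1).
  assert (HM : 0 < M) by (unfold M; pose proof (Rabs_pos al); pose proof (Rabs_pos be); lra).
  destruct (Hf (eps / M) ltac:(apply Rdiv_lt_0_compat; lra)) as [d1 [Hd1 H1]].
  destruct (Hg (eps / M) ltac:(apply Rdiv_lt_0_compat; lra)) as [d2 [Hd2 H2]].
  exists (Rmin d1 d2); split; [apply Rmin_pos; lra|].
  intros y Hy Hyx Hyd. pose proof (Rmin_l d1 d2). pose proof (Rmin_r d1 d2).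
  specialize (H1 y Hy Hyx ltac:(lra)). specialize (H2 y Hy Hyx ltac:(lra)).
  rewrite !Eh.
  replace ((al * f y + be * g y - (al * f x + be * g x)) / (y - x) - (al * l1 + be * l2))
    with (al * ((f y - f x) / (y - x) - l1) + be * ((g y - g x) / (y - x) - l2))
    by (field; lra).
  eapply Rle_lt_trans; [apply Rabs_triang|]. rewrite !Rabs_mult.
  apply Rle_lt_trans with ((Rabs al + Rabs be) * (eps / M)).
  { pose proof (Rabs_pos al). pose proof (Rabs_pos be). nra. }
  apply Rmult_lt_reg_r with M; [lra|].
  replace ((Rabs al + Rabs be) * (eps / M) * M) with ((Rabs al + Rabs be) * eps) by (field; lra).
  unfold M. nra.
Qed.

Lemma deriv_Rplus_right_continuous f x l : deriv_Rplus f x l ->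
  forall eps, 0 < eps ->
  exists d, 0 < d /\ forall y, 0 <= y -> Rabs (y - x) < d -> Rabs (f y - f x) < eps.
Proof.
  intros H eps Heps. destruct (H 1 Rlt_0_1) as [d [Hd H1]].
  set (M := Rabs l + 1).
  assert (HM : 0 < M) by (unfold M; pose proof (Rabs_pos l); lra).
  exists (Rmin d (eps / M)); split; [apply Rmin_pos; [lra|apply Rdiv_lt_0_compat; lra]|].
  intros y Hy Hyd. pose proof (Rmin_l d (eps / M)). pose proof (Rmin_r d (eps / M)).
  destruct (Req_dec y x) as [->|Hyx]; [rewrite Rminus_eq_0, Rabs_R0; lra|].
  specialize (H1 y Hy Hyx ltac:(lra)).
  assert (Hq : Rabs ((f y - f x) / (y - x)) <= M).
  { replace ((f y - f x) / (y - x)) with (((f y - f x) / (y - x) - l) + l) by ring.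
    eapply Rle_trans; [apply Rabs_triang|]. unfold M; lra. }
  replace (f y - f x) with ((f y - f x) / (y - x) * (y - x)) by (field; lra).
  rewrite Rabs_mult.
  apply Rle_lt_trans with (M * Rabs (y - x)); [apply Rmult_le_compat_r; [apply Rabs_pos|lra]|].
  apply Rmult_lt_reg_l with (/ M); [apply Rinv_0_lt_compat; lra|].
  rewrite <- Rmult_assoc, Rinv_l, Rmult_1_l by lra.
  rewrite Rmult_comm. lra.
Qed.

Lemma deriv_Rplus_nonpos_of_nonincreasing f x l : 0 < x ->
  (forall y, x <= y -> f y <= f x) -> deriv_Rplus f x l -> l <= 0.
Proof.
  intros Hx Hdec Hd. destruct (Rle_or_lt l 0) as [|Hl]; [assumption|exfalso].
  destruct (Hd l Hl) as [d [Hd0 H]].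
  specialize (H (x + d / 2) ltac:(lra) ltac:(lra)).
  replace (x + d / 2 - x) with (d / 2) in H by ring.
  rewrite Rabs_right in H by lra. specialize (H ltac:(lra)).
  specialize (Hdec (x + d / 2) ltac:(lra)).
  assert ((f (x + d / 2) - f x) / (d / 2) <= 0).
  { apply Rmult_le_0_r; [lra|]. left; apply Rinv_0_lt_compat; lra. }
  apply Rabs_def2 in H. lra.
Qed.

Lemma le_at_0_of_deriv_Rplus_nonpos f f1 :
  (forall x, 0 <= x -> deriv_Rplus f x (f1 x)) ->
  (forall x l, 0 < x -> deriv_Rplus f x l -> l <= 0) ->
  forall x, 0 <= x -> f x <= f 0.
Proof.
  intros Hd Hneg x Hx. destruct (Rle_or_lt (f x) (f 0)) as [|Hgt]; [assumption|exfalso].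
  destruct (deriv_Rplus_right_continuous f 0 (f1 0) (Hd 0 (Rle_refl 0)) (f x - f 0))
    as [eta [Heta Hc]]; [lra|].
  assert (Hx0 : 0 < x) by (destruct Hx as [|<-]; lra).
  pose proof (Rmin_l (eta / 2) (x / 2)). pose proof (Rmin_r (eta / 2) (x / 2)).
  set (e := Rmin (eta / 2) (x / 2)) in *.
  assert (He : 0 < e) by (apply Rmin_pos; lra).
  assert (Hfe : f e < f x).
  { specialize (Hc e ltac:(lra)). rewrite Rminus_0_r, Rabs_right in Hc by lra.
    specialize (Hc ltac:(lra)). apply Rabs_def2 in Hc. lra. }
  destruct (MVT_cor2 f f1 e x ltac:(lra)) as [c [Hm Hc']].
  { intros c Hc'. apply derivable_pt_lim_of_deriv_Rplus; [lra|]. apply Hd. lra. }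
  assert (f1 c <= 0) by (apply (Hneg c); [lra|apply Hd; lra]).
  assert (f1 c * (x - e) <= 0) by (apply Rmult_le_0_r; lra).
  lra.
Qed.

Lemma derivable_pt_lim_pos_right f x l : derivable_pt_lim f x l -> 0 < l ->
  exists d, 0 < d /\ forall h, 0 < h < d -> f x < f (x + h).
Proof.
  intros H Hl. destruct (H l Hl) as [d Hd]. exists d; split; [apply cond_pos|].
  intros h Hh. specialize (Hd h ltac:(lra) ltac:(rewrite Rabs_right; lra)).
  apply Rabs_def2 in Hd.
  assert (0 < (f (x + h) - f x) / h) by lra.
  assert (E : f (x + h) - f x = (f (x + h) - f x) / h * h) by (field; lra).
  assert (0 < (f (x + h) - f x) / h * h) by (apply Rmult_lt_0_compat; lra). lra.
Qed.

Lemma interior_max_deriv2_nonpos (f f1 : R -> R) a b x l :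
  a < x < b -> (forall y, a < y < b -> f y <= f x) ->
  (forall y, a < y < b -> derivable_pt_lim f y (f1 y)) ->
  derivable_pt_lim f1 x l -> f1 x = 0 /\ l <= 0.
Proof.
  intros Hx Hmax Hd Hd1.
  assert (H1 : f1 x = 0).
  { exact (deriv_maximum f a b x (exist _ (f1 x) (Hd x Hx)) (proj1 Hx) (proj2 Hx)
             (fun y Ha Hb => Hmax y (conj Ha Hb))). }
  split; [exact H1|]. destruct (Rle_or_lt l 0) as [|Hl]; [assumption|exfalso].
  destruct (derivable_pt_lim_pos_right f1 x l Hd1 Hl) as [d [Hd0 Hr]].
  pose proof (Rmin_l d (b - x)). pose proof (Rmin_r d (b - x)).
  assert (0 < Rmin d (b - x)) by (apply Rmin_pos; lra).
  set (t := x + Rmin d (b - x) / 2).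
  destruct (MVT_cor2 f f1 x t) as [c [Hm Hc]]; [unfold t; lra| |].
  { intros c Hc. apply Hd. unfold t in Hc. lra. }
  specialize (Hr (c - x) ltac:(unfold t in Hc; lra)).
  replace (x + (c - x)) with c in Hr by ring.
  specialize (Hmax t ltac:(unfold t; lra)).
  assert (0 < f1 c * (t - x)) by (apply Rmult_lt_0_compat; lra). lra.
Qed.

(** * A maximum principle *)

Definition ode_lhs (a b c k d x y y1 y2 : R) : R :=
  (a + b * x ^ 2) * y2 + 2 * (c + k * x) * y1 - 2 * d * y.

Definition solves (a b c k d : R) (F F1 F2 : R -> R) : Prop :=
  forall x, 0 <= x ->
    deriv_Rplus F x (F1 x) /\ deriv_Rplus F1 x (F2 x) /\
    ode_lhs a b c k d x (F x) (F1 x) (F2 x) = 0.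

Lemma ode_lhs_lincomb a b c k d x al be y y1 y2 z z1 z2 :
  ode_lhs a b c k d x (al * y + be * z) (al * y1 + be * z1) (al * y2 + be * z2) =
  al * ode_lhs a b c k d x y y1 y2 + be * ode_lhs a b c k d x z z1 z2.
Proof. unfold ode_lhs. ring. Qed.

Lemma solves_lincomb a b c k d al be F F1 F2 G G1 G2 :
  solves a b c k d F F1 F2 -> solves a b c k d G G1 G2 ->
  solves a b c k d (fun t => al * F t + be * G t) (fun t => al * F1 t + be * G1 t)
    (fun t => al * F2 t + be * G2 t).
Proof.
  intros HF HG x Hx.
  destruct (HF x Hx) as [F1x [F2x EF]]. destruct (HG x Hx) as [G1x [G2x EG]].
  split; [|split].
  - exact (deriv_Rplus_comb F G _ x _ _ al be (fun _ => eq_refl) F1x G1x).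
  - exact (deriv_Rplus_comb F1 G1 _ x _ _ al be (fun _ => eq_refl) F2x G2x).
  - rewrite ode_lhs_lincomb, EF, EG. ring.
Qed.

Lemma barrier_strict_supersolution a b c k d :
  0 < a -> 0 <= b -> 0 < d -> exists A, 1 <= A /\ forall t, 0 <= t ->
  ode_lhs a b c k d t (A + ln (1 + t)) (/ (1 + t)) (- / (1 + t) ^ 2) < 0.
Proof.
  intros Ha Hb Hd. pose proof (Rabs_pos c). pose proof (Rabs_pos k).
  exists ((Rabs c + Rabs k) / d + 1). split.
  { assert (0 <= (Rabs c + Rabs k) / d) by (apply Rdiv_le_0_compat; lra). lra. }
  intros t Ht. unfold ode_lhs.
  assert (H1 : (a + b * t ^ 2) * - / (1 + t) ^ 2 <= 0).
  { assert (0 < / (1 + t) ^ 2) by (apply Rinv_0_lt_compat, pow_lt; lra).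
    assert (0 <= b * t ^ 2) by (apply Rmult_le_pos; [lra|apply pow2_ge_0]). nra. }
  assert (H2 : 2 * (c + k * t) * / (1 + t) <= 2 * (Rabs c + Rabs k)).
  { replace (2 * (c + k * t) * / (1 + t)) with (2 * ((c + k * t) / (1 + t))) by (field; lra).
    apply Rmult_le_compat_l; [lra|].
    apply Rmult_le_reg_r with (1 + t); [lra|]. unfold Rdiv.
    rewrite Rmult_assoc, Rinv_l, Rmult_1_r by lra.
    pose proof (Rle_abs c). pose proof (Rle_abs k). nra. }
  assert (H3 : 2 * d * ((Rabs c + Rabs k) / d + 1) = 2 * (Rabs c + Rabs k) + 2 * d)
    by (field; lra).
  assert (0 <= ln (1 + t)) by (rewrite <- ln_1; apply ln_le; lra).
  nra.
Qed.

Lemma positive_max_critical V V1 V2 x1 X :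
  (forall t, 0 <= t -> deriv_Rplus V t (V1 t) /\ deriv_Rplus V1 t (V2 t)) ->
  V 0 < 0 -> 0 <= x1 -> 0 < V x1 -> x1 < X -> V X < 0 ->
  exists x0, 0 < x0 /\ 0 < V x0 /\ V1 x0 = 0 /\ V2 x0 <= 0.
Proof.
  intros DV HV0 Hx1 HVx1 Hx1X HVX.
  destruct (deriv_Rplus_right_continuous V 0 (V1 0) (proj1 (DV 0 (Rle_refl 0))) (- V 0))
    as [eta [Heta Hc]]; [lra|].
  assert (Hx1p : 0 < x1) by (destruct Hx1 as [|<-]; lra).
  pose proof (Rmin_l (eta / 2) (x1 / 2)). pose proof (Rmin_r (eta / 2) (x1 / 2)).
  set (e := Rmin (eta / 2) (x1 / 2)) in *.
  assert (He : 0 < e) by (apply Rmin_pos; lra).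
  assert (HVe : V e < 0).
  { specialize (Hc e ltac:(lra)). rewrite Rminus_0_r, Rabs_right in Hc by lra.
    specialize (Hc ltac:(lra)). apply Rabs_def2 in Hc. lra. }
  assert (DV' : forall t, 0 < t -> derivable_pt_lim V t (V1 t) /\ derivable_pt_lim V1 t (V2 t)).
  { intros t Ht. split; apply derivable_pt_lim_of_deriv_Rplus; try lra; apply DV; lra. }
  destruct (continuity_ab_maj V e X) as [x0 [Hmax [Hex0 Hx0X]]]; [lra| |].
  { intros t Ht. apply derivable_continuous_pt. exists (V1 t). apply DV'. lra. }
  assert (V x1 <= V x0) by (apply Hmax; lra).
  destruct (Rle_lt_or_eq_dec _ _ Hex0) as [Hex0'|E]; [|rewrite <- E in *; lra].
  destruct (Rle_lt_or_eq_dec _ _ Hx0X) as [Hx0X'|E]; [|rewrite E in *; lra].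
  destruct (interior_max_deriv2_nonpos V V1 e X x0 (V2 x0)) as [HV1 HV2].
  - lra.
  - intros y Hy. apply Hmax. lra.
  - intros y Hy. apply DV'. lra.
  - apply DV'. lra.
  - exists x0. repeat split; auto; lra.
Qed.

Lemma maximum_principle a b c k d W W1 W2 B :
  0 < a -> 0 <= b -> 0 < d -> solves a b c k d W W1 W2 -> W 0 = 0 ->
  (forall x, 0 <= x -> W x <= B) -> forall x, 0 <= x -> W x <= 0.
Proof.
  intros Ha Hb Hd HW HW0 HB x1 Hx1.
  destruct (Rle_or_lt (W x1) 0) as [|Hpos]; [assumption|exfalso].
  destruct (barrier_strict_supersolution a b c k d Ha Hb Hd) as [A [HA1 HLZ]].
  set (Z := fun t => A + ln (1 + t)).
  assert (HZ : forall t, 0 <= t -> A <= Z t).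
  { intros t Ht. assert (0 <= ln (1 + t)) by (rewrite <- ln_1; apply ln_le; lra). unfold Z; lra. }
  assert (DZ : forall t, 0 <= t -> derivable_pt_lim Z t (/ (1 + t)) /\
                 derivable_pt_lim (fun t => / (1 + t)) t (- / (1 + t) ^ 2)).
  { intros t Ht. unfold Z. split; apply is_derive_Reals; auto_derive; try lra; field; lra. }
  set (eps := W x1 / (2 * Z x1)).
  assert (HZx1 := HZ x1 Hx1).
  assert (Heps : 0 < eps) by (apply Rdiv_lt_0_compat; lra).
  set (V := fun t => 1 * W t + - eps * Z t).
  set (V1 := fun t => 1 * W1 t + - eps * / (1 + t)).
  set (V2 := fun t => 1 * W2 t + - eps * - / (1 + t) ^ 2).
  assert (DV : forall t, 0 <= t -> deriv_Rplus V t (V1 t) /\ deriv_Rplus V1 t (V2 t)).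
  { intros t Ht. destruct (HW t Ht) as [D1 [D2 _]]. destruct (DZ t Ht) as [E1 E2]. split.
    - apply (deriv_Rplus_comb W Z V t (W1 t) (/ (1 + t)) 1 (- eps)); [reflexivity|exact D1|].
      apply deriv_Rplus_of_derivable_pt_lim; exact E1.
    - apply (deriv_Rplus_comb W1 (fun t => / (1 + t)) V1 t (W2 t) (- / (1 + t) ^ 2) 1 (- eps));
        [reflexivity|exact D2|].
      apply deriv_Rplus_of_derivable_pt_lim; exact E2. }
  assert (HV0 : V 0 < 0) by (unfold V; rewrite HW0; specialize (HZ 0 (Rle_refl 0)); nra).
  assert (HVx1 : V x1 = W x1 / 2) by (unfold V, eps; field; lra).
  set (X := exp (B / eps) + x1 + 1).
  assert (HVX : V X < 0).
  { assert (B / eps < ln (1 + X)).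
    { rewrite <- (ln_exp (B / eps)) at 1. apply ln_increasing; [apply exp_pos|unfold X; lra]. }
    assert (B < eps * ln (1 + X)).
    { replace B with (eps * (B / eps)) at 1 by (field; lra). apply Rmult_lt_compat_l; lra. }
    specialize (HB X ltac:(unfold X; pose proof (exp_pos (B / eps)); lra)). unfold V, Z. nra. }
  destruct (positive_max_critical V V1 V2 x1 X DV HV0 Hx1) as [x0 [Hx0 [HVx0 [HV1 HV2]]]];
    [lra|unfold X; pose proof (exp_pos (B / eps)); lra|exact HVX|].
  (* At x0 the equation gives (a + b x0^2) V'' = 2 d V - eps L[Z] > 0, contradicting V'' <= 0. *)
  destruct (HW x0 ltac:(lra)) as [_ [_ EW]].
  pose proof (HLZ x0 ltac:(lra)) as EZ.
  assert (Elin : ode_lhs a b c k d x0 (V x0) (V1 x0) (V2 x0) =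
                 - eps * ode_lhs a b c k d x0 (A + ln (1 + x0)) (/ (1 + x0)) (- / (1 + x0) ^ 2)).
  { unfold V, V1, V2, Z. rewrite ode_lhs_lincomb, EW. ring. }
  unfold ode_lhs at 1 in Elin. rewrite HV1 in Elin.
  assert (0 <= a + b * x0 ^ 2) by (pose proof (pow2_ge_0 x0); nra).
  assert ((a + b * x0 ^ 2) * V2 x0 <= 0) by nra.
  assert (0 < - eps * ode_lhs a b c k d x0 (A + ln (1 + x0)) (/ (1 + x0)) (- / (1 + x0) ^ 2))
    by nra.
  nra.
Qed.

Lemma bounded_solution_zero a b c k d W W1 W2 B :
  0 < a -> 0 <= b -> 0 < d -> solves a b c k d W W1 W2 -> W 0 = 0 ->
  (forall x, 0 <= x -> Rabs (W x) <= B) -> forall x, 0 <= x -> W x = 0.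
Proof.
  intros Ha Hb Hd HW HW0 HB x Hx.
  assert (Hle : W x <= 0).
  { apply (maximum_principle a b c k d W W1 W2 B); auto.
    intros y Hy. specialize (HB y Hy). apply Rabs_le_between in HB. lra. }
  assert (Hge : -1 * W x + 0 * W x <= 0).
  { apply (maximum_principle a b c k d _ _ _ B Ha Hb Hd
             (solves_lincomb _ _ _ _ _ (-1) 0 _ _ _ _ _ _ HW HW));
      [lra| |lra].
    intros y Hy. specialize (HB y Hy). apply Rabs_le_between in HB. lra. }
  lra.
Qed.

Lemma propP_bounded a b c k d g g1 g2 : solves a b c k d g g1 g2 -> propP g ->
  forall x, 0 <= x -> 0 < g x <= g 0.
Proof.
  intros Hg [Hpos Hneg] x Hx. split; [exact (Hpos x Hx)|].
  apply (le_at_0_of_deriv_Rplus_nonpos g g1); [intros y Hy; apply Hg, Hy|exact Hneg|exact Hx].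
Qed.

Lemma bounded_solutions_proportional a b c k d f f1 f2 g g1 g2 Bf Bg :
  0 < a -> 0 <= b -> 0 < d -> solves a b c k d f f1 f2 -> solves a b c k d g g1 g2 ->
  f 0 <> 0 -> (forall x, 0 <= x -> Rabs (f x) <= Bf) -> (forall x, 0 <= x -> Rabs (g x) <= Bg) ->
  forall x, 0 <= x -> g x = g 0 / f 0 * f x.
Proof.
  intros Ha Hb Hd Hf Hg Hf0 HBf HBg x Hx.
  set (K := g 0 / f 0).
  assert (HW := solves_lincomb a b c k d 1 (- K) g g1 g2 f f1 f2 Hg Hf).
  assert (E := bounded_solution_zero a b c k d _ _ _ (Bg + Rabs K * Bf) Ha Hb Hd HW).
  enough (1 * g x + - K * f x = 0) by lra.
  apply E; [unfold K; field; exact Hf0| |exact Hx].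
  intros y Hy. eapply Rle_trans; [apply Rabs_triang|].
  rewrite !Rabs_mult, Rabs_R1, Rabs_Ropp, Rmult_1_l.
  pose proof (HBg y Hy). pose proof (HBf y Hy). pose proof (Rabs_pos K).
  apply Rplus_le_compat; [lra|apply Rmult_le_compat_l; lra].
Qed.

(** * Truncated powers and improper integrals on R_+ *)

Definition pospow (p u : R) : R := if Rle_dec u 0 then 0 else Rpower u p.

Lemma pospow_nonneg p u : 0 <= pospow p u.
Proof. unfold pospow, Rpower. destruct (Rle_dec u 0); [lra|left; apply exp_pos]. Qed.

Lemma pospow_pos p u : 0 < u -> 0 < pospow p u.
Proof. intros H. unfold pospow, Rpower. destruct (Rle_dec u 0); [lra|apply exp_pos]. Qed.

Lemma pospow_le p u v : 0 < p -> u <= v -> pospow p u <= pospow p v.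
Proof.
  intros Hp Huv. unfold pospow.
  destruct (Rle_dec u 0), (Rle_dec v 0); try lra.
  - left; apply exp_pos.
  - apply Rle_Rpower_l; lra.
Qed.

Lemma pospow_le_Rpower_1p p u : 0 < p -> 0 <= u -> pospow p u <= Rpower (1 + u) p.
Proof.
  intros Hp Hu. unfold pospow. destruct (Rle_dec u 0).
  - left; apply exp_pos.
  - apply Rle_Rpower_l; lra.
Qed.

Lemma pospow_small p eps : 0 < p -> 0 < eps ->
  exists d, 0 < d /\ forall u, u < d -> pospow p u < eps.
Proof.
  intros Hp He. exists (Rpower eps (/ p)). split; [apply exp_pos|].
  intros u Hu. unfold pospow. destruct (Rle_dec u 0); [lra|].
  replace eps with (Rpower (Rpower eps (/ p)) p)
    by (rewrite Rpower_mult, Rinv_l, Rpower_1; lra).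
  apply Rlt_Rpower_l; lra.
Qed.

Lemma is_derive_pospow p u : 0 < u -> is_derive (pospow p) u (p * pospow p u / u).
Proof.
  intros Hu.
  apply (is_derive_ext_loc (fun t => exp (p * ln t))).
  { exists (mkposreal u Hu). intros t Ht. apply Rabs_def2 in Ht. simpl in Ht.
    unfold minus, plus, opp in Ht; simpl in Ht.
    unfold pospow, Rpower. destruct (Rle_dec t 0); [lra|reflexivity]. }
  auto_derive; [lra|]. unfold pospow, Rpower. destruct (Rle_dec u 0); [lra|]. field. lra.
Qed.

Lemma pospow_eq_0_near p u : u < 0 -> locally u (fun t => pospow p t = 0).
Proof.
  intros Hu. exists (mkposreal (- u) ltac:(lra)). intros t Ht.
  apply Rabs_def2 in Ht. unfold minus, plus, opp in Ht; simpl in Ht.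
  unfold pospow. destruct (Rle_dec t 0); [reflexivity|lra].
Qed.

Lemma pospow_continuous p u : 0 < p -> continuous (pospow p) u.
Proof.
  intros Hp. destruct (Rtotal_order u 0) as [H|[->|H]].
  - apply (continuous_ext_loc _ (fun _ => 0)); [|apply continuous_const].
    destruct (pospow_eq_0_near p u H) as [d Hd]. exists d. intros t Ht. symmetry; auto.
  - apply continuity_pt_filterlim. intros eps He.
    destruct (pospow_small p eps Hp He) as [d [Hd Hs]].
    exists d; split; [exact Hd|]. intros x [_ Hx]. simpl in *. unfold R_dist in *.
    unfold pospow at 2. destruct (Rle_dec 0 0); [|lra].
    rewrite !Rminus_0_r in *. rewrite Rabs_right by (apply Rle_ge, pospow_nonneg).
    apply Hs. apply Rabs_def2 in Hx. lra.
  - apply (@ex_derive_continuous R_AbsRing R_NormedModule).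
    eexists; apply is_derive_pospow; exact H.
Qed.

Lemma is_derive_mult_pospow p u : 0 < p ->
  is_derive (fun t => t * pospow p t) u ((p + 1) * pospow p u).
Proof.
  intros Hp. destruct (Rtotal_order u 0) as [H|[->|H]].
  - apply (is_derive_ext_loc (fun _ => 0)).
    { destruct (pospow_eq_0_near p u H) as [d Hd]. exists d. intros t Ht.
      rewrite (Hd t Ht), Rmult_0_r. reflexivity. }
    unfold pospow. destruct (Rle_dec u 0); [|lra]. rewrite Rmult_0_r. auto_derive; auto.
  - apply is_derive_Reals. intros eps He.
    destruct (pospow_small p eps Hp He) as [d [Hd Hs]].
    exists (mkposreal d Hd). intros h Hh Hhd. simpl in Hhd.
    unfold pospow at 2 3. destruct (Rle_dec 0 0); [|lra].
    replace ((0 + h) * pospow p (0 + h) - 0 * 0) with (h * pospow p h) by (rewrite Rplus_0_l; ring).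
    replace (h * pospow p h / h - (p + 1) * 0) with (pospow p h) by (field; auto).
    rewrite Rabs_right by (apply Rle_ge, pospow_nonneg). apply Hs. apply Rabs_def2 in Hhd. lra.
  - pose proof (is_derive_mult (fun t => t) (pospow p) u 1 _ (is_derive_id u)
                  (is_derive_pospow p u H) Rmult_comm) as D.
    eapply is_derive_ext; [|eapply filterdiff_ext_lin; [exact D|]]; [reflexivity|].
    intros y. unfold plus, mult, one, scal; simpl. unfold mult; simpl. field. lra.
Qed.

Definition decay (be u : R) : R := Rpower (1 + u) (- (1 + be)).

Lemma decay_pos be u : 0 < decay be u.
Proof. apply exp_pos. Qed.

Lemma RInt_decay_le be b : 0 < be -> 0 <= b ->
  ex_RInt (decay be) 0 b /\ RInt (decay be) 0 b <= / be.
Proof.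
  intros Hbe Hb.
  assert (H : is_RInt (decay be) 0 b
                (minus (- Rpower (1 + b) (- be) / be) (- Rpower (1 + 0) (- be) / be))).
  { apply (is_RInt_derive (fun t => - Rpower (1 + t) (- be) / be)).
    - intros x Hx. rewrite Rmin_left, Rmax_right in Hx by lra. unfold decay, Rpower.
      auto_derive; [lra|].
      replace (- (1 + be) * ln (1 + x)) with (- be * ln (1 + x) + - ln (1 + x)) by ring.
      rewrite exp_plus, exp_Ropp, exp_ln by lra. field. lra.
    - intros x Hx. rewrite Rmin_left, Rmax_right in Hx by lra.
      apply (@ex_derive_continuous R_AbsRing R_NormedModule).
      unfold decay, Rpower. auto_derive. lra. }
  split; [eexists; exact H|].
  rewrite (is_RInt_unique _ _ _ _ H). unfold minus, plus, opp; simpl.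
  unfold Rpower at 2. rewrite Rplus_0_r, ln_1, Rmult_0_r, exp_0.
  assert (0 < Rpower (1 + b) (- be) / be) by (apply Rdiv_lt_0_compat; [apply exp_pos|lra]).
  replace (- (-1 / be)) with (/ be) by (field; lra). lra.
Qed.

Lemma is_lim_Rpower_1_INR_neg be : 0 < be -> is_lim_seq (fun n => Rpower (1 + INR n) (- be)) 0.
Proof.
  intros Hbe. apply is_lim_seq_Reals. intros eps He.
  destruct (INR_archimed 1 (Rpower eps (- / be)) ltac:(lra)) as [N HN].
  rewrite Rmult_1_r in HN. exists N. intros n Hn. apply le_INR in Hn.
  unfold R_dist. rewrite Rminus_0_r, Rabs_right by (left; apply exp_pos).
  replace eps with (Rpower (Rpower eps (- / be)) (- be))
    by (rewrite Rpower_mult; replace (- / be * - be) with 1 by (field; lra); apply Rpower_1; lra).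
  assert (ln (Rpower eps (- / be)) < ln (1 + INR n)) by (apply ln_increasing; [apply exp_pos|lra]).
  set (r := Rpower eps (- / be)) in *. unfold Rpower. apply exp_increasing. nra.
Qed.

(* Improper integral over R_+ along [0, n]; [real] turns an infinite or nonexistent limit into 0. *)
Definition int_Rplus (H : R -> R) : R := real (Lim_seq (fun n => RInt H 0 (INR n))).

Lemma RInt_0_le_of_nonneg (f : R -> R) a b : 0 <= a <= b -> ex_RInt f 0 b ->
  (forall u, a <= u <= b -> 0 <= f u) -> RInt f 0 a <= RInt f 0 b.
Proof.
  intros Hab Hex Hf.
  assert (Ha : ex_RInt f 0 a) by (apply (ex_RInt_Chasles_1 f 0 a b); [lra|exact Hex]).
  assert (Hab' : ex_RInt f a b) by (apply (ex_RInt_Chasles_2 f 0 a b); [lra|exact Hex]).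
  rewrite <- (RInt_Chasles f 0 a b Ha Hab').
  assert (0 <= RInt f a b) by (apply RInt_ge_0; [lra|exact Hab'|intros u Hu; apply Hf; lra]).
  unfold plus; simpl; lra.
Qed.

Lemma ex_lim_RInt_0_INR_of_nonneg (f : R -> R) M :
  (forall b, 0 <= b -> ex_RInt f 0 b) -> (forall u, 0 <= u -> 0 <= f u) ->
  (forall n, RInt f 0 (INR n) <= M) -> ex_finite_lim_seq (fun n => RInt f 0 (INR n)).
Proof.
  intros Hex Hf HM. apply ex_finite_lim_seq_incr with M; [|exact HM].
  intros n. pose proof (pos_INR n). rewrite S_INR.
  apply RInt_0_le_of_nonneg; [lra|apply Hex; lra|intros u Hu; apply Hf; lra].
Qed.

Lemma RInt_lincomb (f g : R -> R) a b al be : ex_RInt f a b -> ex_RInt g a b ->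
  ex_RInt (fun u => al * f u + be * g u) a b /\
  RInt (fun u => al * f u + be * g u) a b = al * RInt f a b + be * RInt g a b.
Proof.
  intros Hf Hg.
  assert (Hf' : ex_RInt (fun u => scal al (f u)) a b) by exact (ex_RInt_scal f a b al Hf).
  assert (Hg' : ex_RInt (fun u => scal be (g u)) a b) by exact (ex_RInt_scal g a b be Hg).
  split; [exact (ex_RInt_plus _ _ a b Hf' Hg')|].
  transitivity (RInt (fun u => scal al (f u)) a b + RInt (fun u => scal be (g u)) a b);
    [exact (RInt_plus _ _ a b Hf' Hg')|].
  exact (f_equal2 Rplus (RInt_scal f a b al Hf) (RInt_scal g a b be Hg)).
Qed.

Lemma is_lim_RInt_lincomb (H1 H2 : R -> R) (l1 l2 al be : R) :
  (forall b, 0 <= b -> ex_RInt H1 0 b) -> (forall b, 0 <= b -> ex_RInt H2 0 b) ->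
  is_lim_seq (fun n => RInt H1 0 (INR n)) l1 -> is_lim_seq (fun n => RInt H2 0 (INR n)) l2 ->
  is_lim_seq (fun n => RInt (fun u => al * H1 u + be * H2 u) 0 (INR n)) (al * l1 + be * l2).
Proof.
  intros E1 E2 L1 L2.
  apply (is_lim_seq_ext (fun n => al * RInt H1 0 (INR n) + be * RInt H2 0 (INR n))).
  { intros n. symmetry. apply RInt_lincomb; [apply E1|apply E2]; apply pos_INR. }
  apply (is_lim_seq_plus' _ _ (al * l1) (be * l2));
    [exact (is_lim_seq_scal_l _ al l1 L1)|exact (is_lim_seq_scal_l _ be l2 L2)].
Qed.

Lemma RInt_dominated_le be K H b : 0 < be -> 0 <= b -> ex_RInt H 0 b ->
  (forall u, 0 <= u -> Rabs (H u) <= K * decay be u) -> Rabs (RInt H 0 b) <= K / be.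
Proof.
  intros Hbe Hb HexH Hd.
  assert (HK : 0 <= K).
  { specialize (Hd 0 (Rle_refl 0)). pose proof (decay_pos be 0). pose proof (Rabs_pos (H 0)).
    destruct (Rle_or_lt 0 K); [assumption|nra]. }
  destruct (RInt_decay_le be b Hbe Hb) as [HexD HintD].
  eapply Rle_trans; [apply abs_RInt_le; assumption|].
  apply Rle_trans with (RInt (fun u => K * decay be u) 0 b).
  - apply RInt_le; [exact Hb|exact (ex_RInt_norm H 0 b HexH)|exact (ex_RInt_scal _ 0 b K HexD)|].
    intros u Hu. apply Hd. lra.
  - replace (RInt (fun u => K * decay be u) 0 b) with (K * RInt (decay be) 0 b)
      by exact (eq_sym (RInt_scal (decay be) 0 b K HexD)).
    unfold Rdiv. apply Rmult_le_compat_l; assumption.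
Qed.

Lemma int_Rplus_dominated be K H : 0 < be -> (forall b, 0 <= b -> ex_RInt H 0 b) ->
  (forall u, 0 <= u -> Rabs (H u) <= K * decay be u) ->
  is_lim_seq (fun n => RInt H 0 (INR n)) (int_Rplus H) /\ Rabs (int_Rplus H) <= K / be.
Proof.
  intros Hbe HexH Hd.
  assert (HK : 0 <= K).
  { specialize (Hd 0 (Rle_refl 0)). pose proof (decay_pos be 0). pose proof (Rabs_pos (H 0)).
    destruct (Rle_or_lt 0 K); [assumption|nra]. }
  assert (HexD : forall b, 0 <= b -> ex_RInt (fun u => K * decay be u) 0 b)
    by (intros b Hb; apply (ex_RInt_scal (decay be)), RInt_decay_le; assumption).
  assert (HbdD : forall b, 0 <= b -> Rabs (RInt (fun u => K * decay be u) 0 b) <= K / be).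
  { intros b Hb. apply RInt_dominated_le; auto. intros u Hu.
    pose proof (decay_pos be u). rewrite Rabs_right; [lra|]. apply Rle_ge, Rmult_le_pos; lra. }
  assert (HbdH : forall b, 0 <= b -> Rabs (RInt H 0 b) <= K / be)
    by (intros b Hb; apply RInt_dominated_le; auto).
  (* H is the difference of the nonnegative integrands H + K decay and K decay. *)
  assert (HexS : forall b, 0 <= b -> ex_RInt (fun u => 1 * H u + 1 * (K * decay be u)) 0 b)
    by (intros b Hb; apply RInt_lincomb; auto).
  destruct (ex_lim_RInt_0_INR_of_nonneg (fun u => 1 * H u + 1 * (K * decay be u)) (2 * (K / be)))
    as [l1 Hl1]; [exact HexS| | |].
  { intros u Hu. specialize (Hd u Hu). apply Rabs_le_between in Hd. lra. }
  { intros n. pose proof (pos_INR n) as Hn.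
    rewrite (proj2 (RInt_lincomb _ _ 0 (INR n) 1 1 (HexH _ Hn) (HexD _ Hn))).
    specialize (HbdD _ Hn). specialize (HbdH _ Hn). apply Rabs_le_between in HbdD, HbdH. lra. }
  destruct (ex_lim_RInt_0_INR_of_nonneg (fun u => K * decay be u) (K / be)) as [l2 Hl2];
    [exact HexD| | |].
  { intros u Hu. specialize (Hd u Hu). pose proof (Rabs_pos (H u)). lra. }
  { intros n. pose proof (HbdD _ (pos_INR n)) as Hn. apply Rabs_le_between in Hn. lra. }
  assert (Hl : is_lim_seq (fun n => RInt H 0 (INR n)) (1 * l1 + -1 * l2)).
  { eapply is_lim_seq_ext; [|exact (is_lim_RInt_lincomb _ _ l1 l2 1 (-1) HexS HexD Hl1 Hl2)].
    intros n. apply RInt_ext. intros u _. apply Rminus_diag_uniq. ring. }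
  assert (E : int_Rplus H = 1 * l1 + -1 * l2).
  { unfold int_Rplus. rewrite (is_lim_seq_unique _ _ Hl). reflexivity. }
  rewrite E. split; [exact Hl|].
  assert (Hn : forall n, - (K / be) <= RInt H 0 (INR n) <= K / be)
    by (intros n; apply Rabs_le_between, HbdH, pos_INR).
  pose proof (is_lim_seq_le _ _ _ _ (fun n => proj1 (Hn n)) (is_lim_seq_const (- (K / be))) Hl).
  pose proof (is_lim_seq_le _ _ _ _ (fun n => proj2 (Hn n)) Hl (is_lim_seq_const (K / be))).
  simpl in *. apply Rabs_le_between. lra.
Qed.

(** * Weyl fractional integrals *)

(* The Weyl fractional integral of order p + 1 without the factor 1 / Gamma (p + 1):
   int_x^oo (s - x)^p F s ds. *)
Definition weyl (p : R) (F : R -> R) (x : R) : R :=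
  int_Rplus (fun u => pospow p u * F (x + u)).

Definition weyl_dominated (p be K : R) (F : R -> R) : Prop :=
  forall u t, 0 <= u -> u <= t -> pospow p u * Rabs (F t) <= K * decay be u.

Lemma taylor2_bound (F F1 F2 : R -> R) s h :
  (forall t, is_derive F t (F1 t)) -> (forall t, is_derive F1 t (F2 t)) ->
  exists c, Rmin s (s + h) <= c /\ Rabs (F (s + h) - F s - h * F1 s) <= h ^ 2 * Rabs (F2 c).
Proof.
  intros D1 D2.
  assert (C : forall G G1 : R -> R,
             (forall t, is_derive G t (G1 t)) -> forall t, continuity_pt G t).
  { intros G G1 DG t. apply continuity_pt_filterlim.
    apply (@ex_derive_continuous R_AbsRing R_NormedModule). eexists; apply DG. }
  destruct (MVT_gen F s (s + h) F1 (fun t _ => D1 t) (fun t _ => C F F1 D1 t)) as [c1 [Hc1 E1]].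
  destruct (MVT_gen F1 s c1 F2 (fun t _ => D2 t) (fun t _ => C F1 F2 D2 t)) as [c2 [Hc2 E2]].
  exists c2. split.
  { revert Hc1 Hc2. unfold Rmin, Rmax. repeat destruct Rle_dec; lra. }
  replace (F (s + h) - F s - h * F1 s) with (h * (F2 c2 * (c1 - s))) by (rewrite <- E2, E1; ring).
  assert (Rabs (c1 - s) <= Rabs h).
  { revert Hc1. unfold Rmin, Rmax, Rabs. repeat destruct Rle_dec; repeat destruct Rcase_abs; lra. }
  rewrite !Rabs_mult, <- (pow2_abs h).
  pose proof (Rabs_pos h). pose proof (Rabs_pos (F2 c2)).
  assert (0 <= Rabs h * Rabs (F2 c2)) by (apply Rmult_le_pos; lra). nra.
Qed.

Section Weyl.

Variables (p be : R).
Hypotheses (Hp : 0 < p) (Hbe : 0 < be).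

Lemma continuous_weyl_integrand (F : R -> R) x u : (forall s, continuous F s) ->
  continuous (fun t => pospow p t * F (x + t)) u.
Proof.
  intros HF. apply (@continuous_mult R_UniformSpace R_AbsRing (pospow p) (fun t => F (x + t))).
  - apply pospow_continuous, Hp.
  - apply (continuous_comp (fun t => x + t) F); [|apply HF].
    apply (@ex_derive_continuous R_AbsRing R_NormedModule). auto_derive. exact I.
Qed.

Lemma ex_RInt_weyl_integrand (F : R -> R) x b : (forall s, continuous F s) ->
  ex_RInt (fun u => pospow p u * F (x + u)) 0 b.
Proof.
  intros HF. apply (@ex_RInt_continuous R_CompleteNormedModule).
  intros u _. apply continuous_weyl_integrand, HF.
Qed.

Lemma weyl_cvg K F x : (forall s, continuous F s) -> weyl_dominated p be K F -> 0 <= x ->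
  is_lim_seq (fun n => RInt (fun u => pospow p u * F (x + u)) 0 (INR n)) (weyl p F x) /\
  Rabs (weyl p F x) <= K / be.
Proof.
  intros HF HK Hx.
  apply int_Rplus_dominated; [exact Hbe|intros b _; apply ex_RInt_weyl_integrand, HF|].
  intros u Hu. rewrite Rabs_mult, (Rabs_right (pospow p u)) by (apply Rle_ge, pospow_nonneg).
  apply HK; lra.
Qed.

Lemma weyl_taylor_remainder K F F1 F2 x y :
  (forall t, is_derive F t (F1 t)) -> (forall t, is_derive F1 t (F2 t)) ->
  weyl_dominated p be K F -> weyl_dominated p be K F1 -> weyl_dominated p be K F2 ->
  0 <= x -> 0 <= y ->
  Rabs (weyl p F y - weyl p F x - (y - x) * weyl p F1 x) <= (y - x) ^ 2 * K / be.
Proof.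
  intros D1 D2 B0 B1 B2 Hx Hy. set (h := y - x).
  assert (C : forall G G1 : R -> R, (forall t, is_derive G t (G1 t)) -> forall t, continuous G t).
  { intros G G1 DG t. apply (@ex_derive_continuous R_AbsRing R_NormedModule). eexists; apply DG. }
  pose proof (fun z b => ex_RInt_weyl_integrand F z b (C F F1 D1)) as E0.
  pose proof (fun b => ex_RInt_weyl_integrand F1 x b (C F1 F2 D2)) as E1.
  set (Rem := fun u => 1 * (pospow p u * F (y + u))
                       + -1 * (1 * (pospow p u * F (x + u)) + h * (pospow p u * F1 (x + u)))).
  assert (ExRem : forall b, 0 <= b -> ex_RInt Rem 0 b).
  { intros b Hb. apply RInt_lincomb; [apply E0|apply RInt_lincomb; [apply E0|apply E1]]. }
  destruct (int_Rplus_dominated be (h ^ 2 * K) Rem Hbe ExRem) as [_ HRem].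
  { intros u Hu. unfold Rem.
    destruct (taylor2_bound F F1 F2 (x + u) h D1 D2) as [c [Hc Hcb]].
    replace (x + u + h) with (y + u) in Hcb by (unfold h; ring).
    assert (Huc : u <= c) by (eapply Rle_trans; [|exact Hc]; apply Rmin_glb; unfold h; lra).
    specialize (B2 u c Hu Huc).
    replace (1 * (pospow p u * F (y + u))
             + -1 * (1 * (pospow p u * F (x + u)) + h * (pospow p u * F1 (x + u))))
      with (pospow p u * (F (y + u) - F (x + u) - h * F1 (x + u))) by ring.
    rewrite Rabs_mult, (Rabs_right (pospow p u)) by (apply Rle_ge, pospow_nonneg).
    pose proof (pospow_nonneg p u). pose proof (pow2_ge_0 h).
    apply Rle_trans with (h ^ 2 * (pospow p u * Rabs (F2 c))); [nra|].
    rewrite Rmult_assoc. apply Rmult_le_compat_l; assumption. }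
  pose proof (is_lim_seq_unique _ _
    (is_lim_RInt_lincomb _ _ _ _ 1 (-1) (fun b _ => E0 y b)
       (fun b _ => proj1 (RInt_lincomb _ _ 0 b 1 h (E0 x b) (E1 b)))
       (proj1 (weyl_cvg K F y (C F F1 D1) B0 Hy))
       (is_lim_RInt_lincomb _ _ _ _ 1 h (fun b _ => E0 x b) (fun b _ => E1 b)
          (proj1 (weyl_cvg K F x (C F F1 D1) B0 Hx))
          (proj1 (weyl_cvg K F1 x (C F1 F2 D2) B1 Hx))))) as L.
  replace (weyl p F y - weyl p F x - h * weyl p F1 x) with (int_Rplus Rem)
    by (unfold int_Rplus, Rem; rewrite L; simpl; ring).
  exact HRem.
Qed.

Lemma deriv_Rplus_weyl K F F1 F2 x : 0 <= K ->
  (forall t, is_derive F t (F1 t)) -> (forall t, is_derive F1 t (F2 t)) ->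
  weyl_dominated p be K F -> weyl_dominated p be K F1 -> weyl_dominated p be K F2 -> 0 <= x ->
  deriv_Rplus (weyl p F) x (weyl p F1 x).
Proof.
  intros HK D1 D2 B0 B1 B2 Hx eps Heps.
  exists (eps * be / (K + 1)). split; [apply Rdiv_lt_0_compat; [apply Rmult_lt_0_compat|]; lra|].
  intros y Hy Hyx Hyd.
  pose proof (weyl_taylor_remainder K F F1 F2 x y D1 D2 B0 B1 B2 Hx Hy) as HRem.
  set (h := y - x) in *.
  assert (Hh0 : h <> 0) by (unfold h; lra).
  assert (Hh : 0 < Rabs h) by (apply Rabs_pos_lt; exact Hh0).
  replace ((weyl p F y - weyl p F x) / h - weyl p F1 x)
    with ((weyl p F y - weyl p F x - h * weyl p F1 x) / h) by (field; exact Hh0).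
  unfold Rdiv. rewrite Rabs_mult, Rabs_inv.
  apply Rle_lt_trans with (Rabs h * (K / be)).
  { apply Rmult_le_reg_r with (Rabs h); [exact Hh|].
    rewrite Rmult_assoc, Rinv_l, Rmult_1_r by lra.
    replace (Rabs h * (K / be) * Rabs h) with (h ^ 2 * K / be)
      by (rewrite <- (pow2_abs h); field; lra). exact HRem. }
  apply Rle_lt_trans with (Rabs h * ((K + 1) / be)).
  { apply Rmult_le_compat_l; [apply Rabs_pos|].
    unfold Rdiv. apply Rmult_le_compat_r; [left; apply Rinv_0_lt_compat|]; lra. }
  replace eps with (eps * be / (K + 1) * ((K + 1) / be)) by (field; lra).
  apply Rmult_lt_compat_r; [apply Rdiv_lt_0_compat|]; lra.
Qed.

Lemma RInt_le_weyl K F x a : (forall s, continuous F s) -> (forall s, 0 <= F s) ->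
  weyl_dominated p be K F -> 0 <= x -> 0 <= a ->
  RInt (fun u => pospow p u * F (x + u)) 0 a <= weyl p F x.
Proof.
  intros HF Hpos HK Hx Ha.
  destruct (weyl_cvg K F x HF HK Hx) as [L _].
  assert (Hmono : forall a b, 0 <= a <= b ->
            RInt (fun u => pospow p u * F (x + u)) 0 a <=
            RInt (fun u => pospow p u * F (x + u)) 0 b).
  { intros a' b' Hab. apply RInt_0_le_of_nonneg; [exact Hab|apply ex_RInt_weyl_integrand, HF|].
    intros u Hu. apply Rmult_le_pos; [apply pospow_nonneg|apply Hpos]. }
  destruct (INR_archimed 1 a ltac:(lra)) as [m Hm]. rewrite Rmult_1_r in Hm.
  eapply Rle_trans; [apply (Hmono a (INR m)); lra|].
  apply (is_lim_seq_incr_compare _ _ L). intros n.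
  pose proof (pos_INR n). rewrite S_INR. apply Hmono. lra.
Qed.

Lemma weyl_pos K F x : (forall s, continuous F s) -> (forall s, 0 < F s) ->
  weyl_dominated p be K F -> 0 <= x -> 0 < weyl p F x.
Proof.
  intros HF Hpos HK Hx.
  eapply Rlt_le_trans; [|apply (RInt_le_weyl K F x 1); auto; [intros s; left; apply Hpos|lra]].
  replace 0 with (RInt (fun _ => 0) 0 1) at 1 by (rewrite RInt_const; apply Rmult_0_r).
  apply RInt_lt; [lra|intros; apply continuous_weyl_integrand, HF|intros; apply continuous_const|].
  intros u Hu. apply Rmult_lt_0_compat; [apply pospow_pos; lra|apply Hpos].
Qed.

Lemma RInt_weyl_integrand_shift_le F x1 x2 b :
  (forall s, continuous F s) -> (forall s, 0 <= F s) -> x1 <= x2 -> 0 <= b ->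
  RInt (fun u => pospow p u * F (x2 + u)) 0 b <=
  RInt (fun v => pospow p v * F (x1 + v)) 0 (b + (x2 - x1)).
Proof.
  intros HF Hpos Hx Hb. set (d := x2 - x1).
  set (G := fun v => pospow p v * F (x1 + v)).
  assert (ExG : forall a b, ex_RInt G a b).
  { intros. apply (@ex_RInt_continuous R_CompleteNormedModule).
    intros. apply continuous_weyl_integrand, HF. }
  (* Substituting v = u + d, the integrand becomes (v - d)^p F (x1 + v) <= v^p F (x1 + v). *)
  set (Gd := fun v => pospow p (v - d) * F (x1 + v)).
  assert (ExGd : ex_RInt Gd (1 * 0 + d) (1 * b + d)).
  { apply (@ex_RInt_continuous R_CompleteNormedModule). intros v _.
    apply (@continuous_mult R_UniformSpace R_AbsRing (fun t => pospow p (t - d))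
             (fun t => F (x1 + t))).
    - apply (continuous_comp (fun t => t - d) (pospow p)); [|apply pospow_continuous, Hp].
      apply (@ex_derive_continuous R_AbsRing R_NormedModule). auto_derive. exact I.
    - apply (continuous_comp (fun t => x1 + t) F); [|apply HF].
      apply (@ex_derive_continuous R_AbsRing R_NormedModule). auto_derive. exact I. }
  assert (E : RInt (fun u => pospow p u * F (x2 + u)) 0 b = RInt Gd (1 * 0 + d) (1 * b + d)).
  { rewrite <- (RInt_comp_lin Gd 1 d 0 b ExGd). apply RInt_ext. intros u _.
    unfold Gd, scal; simpl; unfold mult; simpl.
    replace (1 * u + d - d) with u by ring.
    replace (x1 + (1 * u + d)) with (x2 + u) by (unfold d; ring). ring. }
  rewrite E, Rmult_0_r, Rplus_0_l, Rmult_1_l in *.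
  apply Rle_trans with (RInt G d (b + d)).
  { apply RInt_le; [unfold d; lra|exact ExGd|apply ExG|].
    intros v Hv. apply Rmult_le_compat_r; [apply Hpos|].
    apply pospow_le; [exact Hp|unfold d; lra]. }
  rewrite <- (RInt_Chasles G 0 d (b + d) (ExG _ _) (ExG _ _)).
  assert (0 <= RInt G 0 d); [|unfold plus; simpl; lra].
  apply RInt_ge_0; [unfold d; lra|apply ExG|].
  intros v Hv. apply Rmult_le_pos; [apply pospow_nonneg|apply Hpos].
Qed.

Lemma weyl_nonincreasing K F x1 x2 : (forall s, continuous F s) -> (forall s, 0 <= F s) ->
  weyl_dominated p be K F -> 0 <= x1 <= x2 -> weyl p F x2 <= weyl p F x1.
Proof.
  intros HF Hpos HK Hx.
  destruct (weyl_cvg K F x2 HF HK ltac:(lra)) as [L2 _].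
  assert (Hn : forall n, RInt (fun u => pospow p u * F (x2 + u)) 0 (INR n) <= weyl p F x1).
  { intros n. pose proof (pos_INR n).
    eapply Rle_trans; [apply (RInt_weyl_integrand_shift_le F x1 x2); auto; lra|].
    apply (RInt_le_weyl K); auto; lra. }
  exact (is_lim_seq_le _ _ _ _ Hn L2 (is_lim_seq_const (weyl p F x1))).
Qed.

End Weyl.

(** * The integral solution *)

Definition poly_growth (n : nat) (Q : R -> R) : Prop :=
  exists A, forall s, Rabs (Q s) <= A * (1 + s ^ 2) ^ n.

Lemma one_le_1_plus_sq s : 1 <= 1 + s ^ 2.
Proof. pose proof (pow2_ge_0 s). lra. Qed.

Lemma poly_growth_ext n Q1 Q2 :
  (forall s, Q1 s = Q2 s) -> poly_growth n Q1 -> poly_growth n Q2.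
Proof. intros E [A H]. exists A. intros s. rewrite <- E. apply H. Qed.

Lemma poly_growth_const n a : poly_growth n (fun _ => a).
Proof.
  exists (Rabs a). intros s. rewrite <- (Rmult_1_r (Rabs a)) at 1.
  apply Rmult_le_compat_l; [apply Rabs_pos|]. apply pow_R1_Rle, one_le_1_plus_sq.
Qed.

Lemma poly_growth_id : poly_growth 1 (fun s => s).
Proof.
  exists 1. intros s. rewrite pow_1, Rmult_1_l.
  destruct (Rle_or_lt (Rabs s) 1); [pose proof (pow2_ge_0 s); lra|].
  rewrite <- (pow2_abs s). simpl. nra.
Qed.

Lemma poly_growth_plus n Q1 Q2 :
  poly_growth n Q1 -> poly_growth n Q2 -> poly_growth n (fun s => Q1 s + Q2 s).
Proof.
  intros [A1 H1] [A2 H2]. exists (A1 + A2). intros s.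
  eapply Rle_trans; [apply Rabs_triang|]. specialize (H1 s). specialize (H2 s). lra.
Qed.

Lemma poly_growth_mult n m Q1 Q2 :
  poly_growth n Q1 -> poly_growth m Q2 -> poly_growth (n + m) (fun s => Q1 s * Q2 s).
Proof.
  intros [A1 H1] [A2 H2]. exists (A1 * A2). intros s. rewrite pow_add, Rabs_mult.
  replace (A1 * A2 * ((1 + s ^ 2) ^ n * (1 + s ^ 2) ^ m))
    with ((A1 * (1 + s ^ 2) ^ n) * (A2 * (1 + s ^ 2) ^ m)) by ring.
  apply Rmult_le_compat; try apply Rabs_pos; auto.
Qed.

Lemma poly_growth_le n m Q : (n <= m)%nat -> poly_growth n Q -> poly_growth m Q.
Proof.
  intros Hnm [A H]. exists (Rabs A). intros s.
  pose proof (one_le_1_plus_sq s).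
  apply Rle_trans with (Rabs A * (1 + s ^ 2) ^ n).
  - eapply Rle_trans; [apply H|]. apply Rmult_le_compat_r; [apply pow_le; lra|apply Rle_abs].
  - apply Rmult_le_compat_l; [apply Rabs_pos|]. apply Rle_pow; [lra|exact Hnm].
Qed.

Lemma exp_le_compat x y : x <= y -> exp x <= exp y.
Proof. intros [H|H]; [left; apply exp_increasing, H|right; rewrite H; reflexivity]. Qed.

Section Kernel.

(* [sx], [sr], [c], [mu] stand for s_xi, s_rho, mu_xi, mu_rho. *)
Variables (sx sr c mu p : R).
Hypotheses (Hsx : 0 < sx) (Hsr : 0 < sr).

Definition sigma2 (s : R) : R := sx ^ 2 + sr ^ 2 * s ^ 2.
Definition kern_rate : R := 2 * p * sr ^ 2 + 2 * mu + sr ^ 2.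
Definition kern_drift (s : R) : R := kern_rate * s + 2 * c.

(* The positive solution of [sigma2 k' = - kern_drift k]; it decays like s^(-kern_rate/sr^2). *)
Definition kern (s : R) : R :=
  exp (- (kern_rate / (2 * sr ^ 2)) * ln (sigma2 s) - (2 * c / (sx * sr)) * atan (sr / sx * s)).

Definition num2 (s : R) : R :=
  - kern_rate * sigma2 s + 2 * sr ^ 2 * s * kern_drift s + kern_drift s ^ 2.
Definition num3 (s : R) : R :=
  kern_drift s * (2 * sr ^ 2 + 2 * kern_rate) * sigma2 s
  - 2 * num2 s * (2 * sr ^ 2 * s) - num2 s * kern_drift s.

Definition kern1 (s : R) : R := kern s * - kern_drift s / sigma2 s ^ 1.
Definition kern2 (s : R) : R := kern s * num2 s / sigma2 s ^ 2.
Definition kern3 (s : R) : R := kern s * num3 s / sigma2 s ^ 3.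

Lemma sigma2_pos s : 0 < sigma2 s.
Proof.
  unfold sigma2. pose proof (pow_lt sx 2 Hsx).
  assert (0 <= sr ^ 2 * s ^ 2) by (apply Rmult_le_pos; apply pow2_ge_0). lra.
Qed.

Lemma kern_pos s : 0 < kern s.
Proof. apply exp_pos. Qed.

Lemma is_derive_sigma2 s : is_derive sigma2 s (2 * sr ^ 2 * s).
Proof. unfold sigma2. auto_derive; [exact I|ring]. Qed.

Lemma is_derive_kern s : is_derive kern s (kern1 s).
Proof.
  pose proof (sigma2_pos s) as Hs. unfold kern1, kern. unfold sigma2 in *. auto_derive.
  - lra.
  - match goal with |- _ * exp ?X = exp ?Y * _ / _ => replace Y with X by (simpl; ring) end.
    unfold kern_drift. field. repeat split; lra.
Qed.

Lemma is_derive_kern_ratio (Q : R -> R) Qd n s : is_derive Q s Qd ->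
  is_derive (fun t => kern t * Q t / sigma2 t ^ n) s
    (kern s * (Qd * sigma2 s - INR n * Q s * (2 * sr ^ 2 * s) - Q s * kern_drift s)
       / sigma2 s ^ S n).
Proof.
  intros HQ. pose proof (sigma2_pos s) as Hs.
  assert (Hn : sigma2 s ^ n <> 0) by (apply pow_nonzero; lra).
  apply (is_derive_ext (fun t => kern t * Q t * / sigma2 t ^ n)); [reflexivity|].
  pose proof (is_derive_mult _ _ s _ _ (is_derive_kern s) HQ Rmult_comm) as D1.
  pose proof (is_derive_inv (fun t => sigma2 t ^ n) s _
                (is_derive_pow sigma2 n s _ (is_derive_sigma2 s)) Hn) as D2.
  pose proof (is_derive_mult _ _ s _ _ D1 D2 Rmult_comm) as D.
  eapply is_derive_ext; [|eapply filterdiff_ext_lin; [exact D|]]; [reflexivity|].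
  intros y. unfold plus, mult, scal; simpl. unfold mult; simpl. unfold kern1.
  destruct n as [|m].
  - simpl. field. lra.
  - rewrite S_INR. simpl pred. simpl pow. assert (sigma2 s ^ m <> 0) by (apply pow_nonzero; lra).
    field. lra.
Qed.

Lemma is_derive_kern1 s : is_derive kern1 s (kern2 s).
Proof.
  assert (HQ : is_derive (fun t => - kern_drift t) s (- kern_rate))
    by (unfold kern_drift; auto_derive; [exact I|ring]).
  pose proof (is_derive_kern_ratio _ _ 1 s HQ) as D.
  replace (kern2 s) with
    (kern s * (- kern_rate * sigma2 s - INR 1 * - kern_drift s * (2 * sr ^ 2 * s)
               - - kern_drift s * kern_drift s) / sigma2 s ^ 2)
    by (unfold kern2, num2; simpl INR; field; pose proof (sigma2_pos s); lra).
  exact D.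
Qed.

Lemma is_derive_kern2 s : is_derive kern2 s (kern3 s).
Proof.
  assert (HQ : is_derive num2 s (kern_drift s * (2 * sr ^ 2 + 2 * kern_rate)))
    by (unfold num2, kern_drift, sigma2; auto_derive; [exact I|ring]).
  pose proof (is_derive_kern_ratio _ _ 2 s HQ) as D.
  replace (kern3 s) with
    (kern s * (kern_drift s * (2 * sr ^ 2 + 2 * kern_rate) * sigma2 s
               - INR 2 * num2 s * (2 * sr ^ 2 * s) - num2 s * kern_drift s) / sigma2 s ^ 3)
    by (unfold kern3, num3; simpl INR; field; pose proof (sigma2_pos s); lra).
  exact D.
Qed.

Lemma poly_growth_sigma2 : poly_growth 1 sigma2.
Proof.
  exists (sx ^ 2 + sr ^ 2). intros s. rewrite pow_1, Rabs_right by (left; apply sigma2_pos).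
  unfold sigma2. pose proof (pow2_ge_0 s). pose proof (pow2_ge_0 sx). pose proof (pow2_ge_0 sr).
  nra.
Qed.

Lemma poly_growth_kern_drift : poly_growth 1 kern_drift.
Proof.
  apply (poly_growth_plus 1 (fun s => kern_rate * s) (fun _ => 2 * c)); [|apply poly_growth_const].
  apply (poly_growth_mult 0 1); [apply poly_growth_const|apply poly_growth_id].
Qed.

Lemma poly_growth_num2 : poly_growth 2 num2.
Proof.
  apply (poly_growth_plus 2 (fun s => - kern_rate * sigma2 s + 2 * sr ^ 2 * s * kern_drift s)
                            (fun s => kern_drift s ^ 2)).
  - apply poly_growth_plus.
    + apply (poly_growth_le 1); [lia|].
      apply (poly_growth_mult 0 1); [apply poly_growth_const|apply poly_growth_sigma2].
    + apply (poly_growth_mult 1 1); [|apply poly_growth_kern_drift].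
      apply (poly_growth_mult 0 1); [apply poly_growth_const|apply poly_growth_id].
  - apply (poly_growth_ext 2 (fun s => kern_drift s * kern_drift s)); [intros; ring|].
    apply (poly_growth_mult 1 1); apply poly_growth_kern_drift.
Qed.

Lemma poly_growth_num3 : poly_growth 3 num3.
Proof.
  apply poly_growth_plus; [apply poly_growth_plus|].
  - apply (poly_growth_le 2); [lia|].
    apply (poly_growth_mult 1 1); [|apply poly_growth_sigma2].
    apply (poly_growth_mult 1 0); [apply poly_growth_kern_drift|apply poly_growth_const].
  - apply (poly_growth_ext 3 (fun s => - (4 * sr ^ 2) * num2 s * s)); [intros; ring|].
    apply (poly_growth_mult 2 1); [|apply poly_growth_id].
    apply (poly_growth_mult 0 2); [apply poly_growth_const|apply poly_growth_num2].
  - apply (poly_growth_ext 3 (fun s => - 1 * num2 s * kern_drift s)); [intros; ring|].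
    apply (poly_growth_mult 2 1); [|apply poly_growth_kern_drift].
    apply (poly_growth_mult 0 2); [apply poly_growth_const|apply poly_growth_num2].
Qed.

Lemma sigma2_ge s : Rmin (sx ^ 2) (sr ^ 2) * (1 + s ^ 2) <= sigma2 s.
Proof.
  unfold sigma2. pose proof (Rmin_l (sx ^ 2) (sr ^ 2)). pose proof (Rmin_r (sx ^ 2) (sr ^ 2)).
  pose proof (pow2_ge_0 s). nra.
Qed.

Lemma kern_ratio_bounded n Q : poly_growth n Q ->
  exists A, 0 <= A /\ forall s, Rabs (kern s * Q s / sigma2 s ^ n) <= A * kern s.
Proof.
  intros [A HA]. set (m := Rmin (sx ^ 2) (sr ^ 2)).
  assert (Hm : 0 < m) by (apply Rmin_pos; apply pow_lt; assumption).
  assert (HmT : forall s, 0 < m * (1 + s ^ 2)) by (intros s; pose proof (one_le_1_plus_sq s); nra).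
  exists (Rabs A / m ^ n). split; [apply Rdiv_le_0_compat; [apply Rabs_pos|apply pow_lt, Hm]|].
  intros s. pose proof (kern_pos s) as Hk. pose proof (sigma2_ge s) as Hs. fold m in Hs.
  set (T := (1 + s ^ 2) ^ n). set (S := sigma2 s ^ n). set (M := m ^ n).
  assert (HT : 0 < T) by (apply pow_lt; pose proof (one_le_1_plus_sq s); lra).
  assert (HM : 0 < M) by (apply pow_lt, Hm).
  assert (HS : M * T <= S).
  { unfold M, T, S. rewrite <- Rpow_mult_distr. apply pow_incr. specialize (HmT s). lra. }
  assert (HQ : Rabs (Q s) <= Rabs A * T).
  { eapply Rle_trans; [apply HA|]. apply Rmult_le_compat_r; [lra|apply Rle_abs]. }
  assert (HS0 : 0 < S) by (apply pow_lt, sigma2_pos).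
  unfold Rdiv. rewrite !Rabs_mult, Rabs_inv, (Rabs_right (kern s)), (Rabs_right S) by lra.
  apply Rmult_le_reg_r with (S * M); [nra|].
  replace (kern s * Rabs (Q s) * / S * (S * M)) with (kern s * Rabs (Q s) * M) by (field; nra).
  replace (Rabs A * / M * kern s * (S * M)) with (kern s * Rabs A * S) by (field; lra).
  pose proof (Rabs_pos A). pose proof (Rabs_pos (Q s)).
  assert (kern s * Rabs (Q s) * M <= kern s * (Rabs A * T) * M).
  { apply Rmult_le_compat_r; [lra|]. apply Rmult_le_compat_l; lra. }
  assert (kern s * Rabs A * (M * T) <= kern s * Rabs A * S) by (apply Rmult_le_compat_l; nra).
  nra.
Qed.

Lemma kern_derivs_bounded : exists Kb, 0 <= Kb /\ forall s,
  Rabs (kern1 s) <= Kb * kern s /\ Rabs (kern2 s) <= Kb * kern s /\ Rabs (kern3 s) <= Kb * kern s.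
Proof.
  destruct (kern_ratio_bounded 1 (fun s => - kern_drift s)) as [A1 [HA1 H1]].
  { apply (poly_growth_ext 1 (fun s => -1 * kern_drift s)); [intros; ring|].
    apply (poly_growth_mult 0 1); [apply poly_growth_const|apply poly_growth_kern_drift]. }
  destruct (kern_ratio_bounded 2 num2 poly_growth_num2) as [A2 [HA2 H2]].
  destruct (kern_ratio_bounded 3 num3 poly_growth_num3) as [A3 [HA3 H3]].
  exists (A1 + A2 + A3). split; [lra|]. intros s. pose proof (kern_pos s).
  specialize (H1 s). specialize (H2 s). specialize (H3 s).
  unfold kern1, kern2, kern3. repeat split; nra.
Qed.

Lemma kern_le_Rpower : 0 <= kern_rate -> exists Cg, 0 < Cg /\ forall s, 0 <= s ->
  kern s <= Cg * Rpower (1 + s) (- (kern_rate / sr ^ 2)).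
Proof.
  intros Hq0. set (q := kern_rate / sr ^ 2).
  assert (Hq : 0 <= q) by (apply Rdiv_le_0_compat; [lra|apply pow_lt, Hsr]).
  set (m := Rmin (sx ^ 2) (sr ^ 2)).
  assert (Hm : 0 < m) by (apply Rmin_pos; apply pow_lt; assumption).
  set (th := 2 * c / (sx * sr)).
  exists (exp (- (q / 2) * ln (m / 2) + 2 * Rabs th)). split; [apply exp_pos|].
  intros s Hs. unfold kern, Rpower. rewrite <- exp_plus.
  apply exp_le_compat.
  assert (Hsg : m / 2 * (1 + s) ^ 2 <= sigma2 s).
  { eapply Rle_trans; [|apply sigma2_ge]. fold m.
    assert (0 <= m / 2 * (1 - s) ^ 2) by (apply Rmult_le_pos; [lra|apply pow2_ge_0]).
    replace (m * (1 + s ^ 2)) with (m / 2 * (1 + s) ^ 2 + m / 2 * (1 - s) ^ 2) by field. lra. }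
  assert (Hln : ln (m / 2) + 2 * ln (1 + s) <= ln (sigma2 s)).
  { replace (2 * ln (1 + s)) with (ln ((1 + s) ^ 2)) by (rewrite ln_pow by lra; simpl; ring).
    rewrite <- ln_mult by (try apply pow_lt; lra).
    apply ln_le; [apply Rmult_lt_0_compat; [lra|apply pow_lt; lra]|exact Hsg]. }
  replace (kern_rate / (2 * sr ^ 2)) with (q / 2) by (unfold q; field; lra).
  fold th.
  assert (Hat : - (th * atan (sr / sx * s)) <= 2 * Rabs th).
  { pose proof (atan_bound (sr / sx * s)). pose proof PI_4.
    assert (Rabs (atan (sr / sx * s)) <= 2) by (apply Rabs_le; lra).
    eapply Rle_trans; [apply Rle_abs|]. rewrite Rabs_Ropp, Rabs_mult.
    pose proof (Rabs_pos th). nra. }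
  nra.
Qed.

Variable d : R.
Hypotheses (Hp : 0 < p) (Hp_mu : 0 < p * sr ^ 2 + 2 * mu)
  (Hd : sr ^ 2 * p ^ 2 + 2 * mu * p = 2 * d).

Let be := kern_rate / sr ^ 2 - p - 1.

Let Hbe : 0 < be.
Proof.
  unfold be, kern_rate. pose proof (pow_lt sr 2 Hsr).
  replace ((2 * p * sr ^ 2 + 2 * mu + sr ^ 2) / sr ^ 2 - p - 1)
    with ((p * sr ^ 2 + 2 * mu) / sr ^ 2) by (field; lra).
  apply Rdiv_lt_0_compat; lra.
Qed.

Lemma pospow_kern_le : exists Cg, 0 < Cg /\ forall u t, 0 <= u -> u <= t ->
  pospow p u * kern t <= Cg * decay be u.
Proof.
  assert (Hq0 : 0 <= kern_rate).
  { assert (0 < kern_rate / sr ^ 2) by (pose proof Hbe; unfold be in *; lra).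
    apply Rlt_le. apply (Rmult_lt_reg_r (/ sr ^ 2)); [apply Rinv_0_lt_compat, pow_lt, Hsr|].
    rewrite Rmult_0_l. exact H. }
  destruct (kern_le_Rpower Hq0) as [Cg [HCg Hk]]. exists Cg. split; [exact HCg|].
  intros u t Hu Hut.
  apply Rle_trans with (Rpower (1 + u) p * (Cg * Rpower (1 + u) (- (kern_rate / sr ^ 2)))).
  - apply Rmult_le_compat;
      [apply pospow_nonneg|left; apply kern_pos|apply pospow_le_Rpower_1p; lra|].
    eapply Rle_trans; [apply Hk; lra|]. apply Rmult_le_compat_l; [lra|].
    unfold Rpower. apply exp_le_compat.
    assert (ln (1 + u) <= ln (1 + t)) by (apply ln_le; lra).
    assert (0 <= kern_rate / sr ^ 2) by (pose proof Hbe; unfold be in *; lra). nra.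
  - right. unfold decay, be. rewrite Rmult_comm, Rmult_assoc, <- Rpower_plus.
    f_equal. f_equal. ring.
Qed.

Lemma kern_weyl_dominated : exists K, 0 <= K /\
  weyl_dominated p be K kern /\ weyl_dominated p be K kern1 /\
  weyl_dominated p be K kern2 /\ weyl_dominated p be K kern3.
Proof.
  destruct kern_derivs_bounded as [Kb [HKb HKs]].
  destruct pospow_kern_le as [Cg [HCg HC]].
  assert (Dom : forall F, (forall s, Rabs (F s) <= (Kb + 1) * kern s) ->
                  weyl_dominated p be ((Kb + 1) * Cg) F).
  { intros F HF u t Hu Hut. specialize (HF t). specialize (HC u t Hu Hut).
    pose proof (pospow_nonneg p u).
    apply Rle_trans with ((Kb + 1) * (pospow p u * kern t)).
    - replace ((Kb + 1) * (pospow p u * kern t)) with (pospow p u * ((Kb + 1) * kern t)) by ring.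
      apply Rmult_le_compat_l; assumption.
    - rewrite Rmult_assoc. apply Rmult_le_compat_l; lra. }
  exists ((Kb + 1) * Cg). split; [apply Rmult_le_pos; lra|].
  repeat split; apply Dom; intros s; destruct (HKs s) as [H1 [H2 H3]]; pose proof (kern_pos s).
  - rewrite Rabs_right by lra. nra.
  - lra.
  - lra.
  - lra.
Qed.

Definition ode_drift (x : R) : R := 2 * c + (2 * mu + sr ^ 2) * x.

Definition flux_num (x s : R) : R :=
  sigma2 x * (p * sr ^ 2 - kern_rate) + sr ^ 2 * (x + s) * (p * sr ^ 2 * (x + s) + ode_drift x).
Definition flux_num' (x s : R) : R :=
  sr ^ 2 * (p * sr ^ 2 * (x + s) + ode_drift x) + sr ^ 2 * (x + s) * (p * sr ^ 2).

(* [flux x] is chosen so that [u |-> u^(p+1) flux x (x + u)] is a primitive of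
   [u |-> u^p (sigma2 x kern'' + ode_drift x kern' - 2 d kern) (x + u)]. *)
Definition flux (x s : R) : R := kern s * flux_num x s / sigma2 s ^ 1.
Definition flux' (x s : R) : R :=
  kern s * (flux_num' x s * sigma2 s - INR 1 * flux_num x s * (2 * sr ^ 2 * s)
            - flux_num x s * kern_drift s) / sigma2 s ^ 2.

Lemma is_derive_flux x s : is_derive (flux x) s (flux' x s).
Proof.
  apply (is_derive_kern_ratio (flux_num x) (flux_num' x s) 1 s).
  unfold flux_num, flux_num'. auto_derive; [exact I|ring].
Qed.

Lemma flux_identity x s :
  (p + 1) * flux x s + (s - x) * flux' x s =
  sigma2 x * kern2 s + ode_drift x * kern1 s - 2 * d * kern s.
Proof.
  pose proof (sigma2_pos s) as Hs. rewrite <- Hd.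
  unfold flux, flux', kern1, kern2, num2, kern_drift, flux_num, flux_num', ode_drift, kern_rate.
  simpl INR. set (k := kern s). clearbody k. unfold sigma2 in *. field. lra.
Qed.

Lemma flux_boundary_identity x s :
  (s - x) * flux x s = kern s * (p * sr ^ 2 * (x + s) + ode_drift x) + sigma2 x * kern1 s.
Proof.
  pose proof (sigma2_pos s) as Hs.
  unfold flux, kern1, kern_drift, flux_num, ode_drift, kern_rate.
  set (k := kern s). clearbody k. unfold sigma2 in *. field. lra.
Qed.

Lemma continuous_kern_derivs s :
  continuous kern s /\ continuous kern1 s /\ continuous kern2 s.
Proof.
  split; [|split]; apply (@ex_derive_continuous R_AbsRing R_NormedModule); eexists;
    [apply is_derive_kern|apply is_derive_kern1|apply is_derive_kern2].
Qed.

Lemma RInt_ode_integrand x b : 0 <= b ->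
  RInt (fun u => pospow p u * (sigma2 x * kern2 (x + u) + ode_drift x * kern1 (x + u)
                               - 2 * d * kern (x + u))) 0 b
  = b * pospow p b * flux x (x + b).
Proof.
  intros Hb.
  assert (D : forall u : R, is_derive (fun t => t * pospow p t * flux x (x + t)) u
                (pospow p u * (sigma2 x * kern2 (x + u) + ode_drift x * kern1 (x + u)
                               - 2 * d * kern (x + u)))).
  { intros u.
    assert (Ds : is_derive (fun t => x + t) u 1) by (auto_derive; [exact I|ring]).
    pose proof (is_derive_comp (flux x) (fun t => x + t) u _ _ (is_derive_flux x (x + u)) Ds) as D2.
    pose proof (is_derive_mult _ _ u _ _ (is_derive_mult_pospow p u Hp) D2 Rmult_comm) as D3.
    match type of D3 with is_derive _ _ ?l =>
      replace (pospow p u * _) with (l : R); [exact D3|] end.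
    unfold plus, mult, scal; simpl. unfold mult; simpl.
    rewrite <- (flux_identity x (x + u)). replace (x + u - x) with u by ring. ring. }
  assert (C : forall u, continuous (fun u => pospow p u * (sigma2 x * kern2 (x + u)
                 + ode_drift x * kern1 (x + u) - 2 * d * kern (x + u))) u).
  { intros u. apply (@continuous_mult R_UniformSpace R_AbsRing (pospow p));
      [apply pospow_continuous, Hp|].
    apply (@ex_derive_continuous R_AbsRing R_NormedModule). auto_derive.
    repeat split; eexists; [apply is_derive_kern2|apply is_derive_kern1|apply is_derive_kern]. }
  pose proof (is_RInt_derive _ _ 0 b (fun u _ => D u) (fun u _ => C u)) as HI.
  rewrite (is_RInt_unique _ _ _ _ HI). unfold minus, plus, opp; simpl. ring.
Qed.

Lemma flux_boundary_bound x : 0 <= x -> exists C, forall u, 0 <= u ->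
  Rabs (u * pospow p u * flux x (x + u)) <= C * Rpower (1 + u) (- be).
Proof.
  intros Hx.
  destruct kern_derivs_bounded as [Kb [HKb Hkb]].
  assert (Hk1 : forall s, Rabs (kern1 s) <= Kb * kern s) by apply Hkb.
  destruct pospow_kern_le as [Cg [HCg HC]].
  pose proof (sigma2_pos x) as Hsx2. pose proof (pow_lt sr 2 Hsr) as Hsr2.
  set (Cz := 2 * p * sr ^ 2 * (1 + x) + Rabs (ode_drift x) + sigma2 x * Kb).
  exists (Cz * Cg). intros u Hu. set (s := x + u).
  pose proof (pospow_nonneg p u) as Hpw. pose proof (kern_pos s) as Hks.
  assert (E : u * pospow p u * flux x s =
              pospow p u * (kern s * (p * sr ^ 2 * (x + s) + ode_drift x) + sigma2 x * kern1 s)).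
  { rewrite <- flux_boundary_identity. unfold s. ring. }
  assert (B1 : Rabs (kern s * (p * sr ^ 2 * (x + s) + ode_drift x) + sigma2 x * kern1 s)
               <= kern s * (Cz * (1 + u))).
  { eapply Rle_trans; [apply Rabs_triang|].
    rewrite !Rabs_mult, Rabs_right, (Rabs_right (sigma2 x)) by lra.
    pose proof (Hk1 s). pose proof (Rabs_pos (ode_drift x)).
    assert (Rabs (p * sr ^ 2 * (x + s) + ode_drift x) <= p * sr ^ 2 * (x + s) + Rabs (ode_drift x)).
    { eapply Rle_trans; [apply Rabs_triang|]. rewrite (Rabs_right (p * sr ^ 2 * (x + s))); [lra|].
      apply Rle_ge. unfold s. repeat apply Rmult_le_pos; lra. }
    assert (p * sr ^ 2 * (x + s) + Rabs (ode_drift x) + sigma2 x * Kb <= Cz * (1 + u)).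
    { unfold Cz, s. assert (0 <= p * sr ^ 2) by (apply Rmult_le_pos; lra).
      assert (0 <= p * sr ^ 2 * (2 + u + 2 * x * u)) by (apply Rmult_le_pos; nra).
      assert (0 <= Rabs (ode_drift x) * u) by (apply Rmult_le_pos; lra).
      assert (0 <= sigma2 x * Kb * u) by (repeat apply Rmult_le_pos; lra). nra. }
    nra. }
  assert (B2 : (1 + u) * decay be u = Rpower (1 + u) (- be)).
  { unfold decay. rewrite <- (Rpower_1 (1 + u)) at 1 by lra. rewrite <- Rpower_plus.
    f_equal. ring. }
  rewrite E, Rabs_mult, (Rabs_right (pospow p u)) by lra.
  apply Rle_trans with (pospow p u * kern s * (Cz * (1 + u))).
  { replace (pospow p u * kern s * (Cz * (1 + u))) with (pospow p u * (kern s * (Cz * (1 + u))))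
      by ring.
    apply Rmult_le_compat_l; assumption. }
  rewrite <- B2.
  replace (Cz * Cg * ((1 + u) * decay be u)) with (Cg * decay be u * (Cz * (1 + u))) by ring.
  apply Rmult_le_compat_r; [|apply HC; unfold s; lra].
  unfold Cz. pose proof (Rabs_pos (ode_drift x)).
  assert (0 <= sigma2 x * Kb) by (apply Rmult_le_pos; lra).
  assert (0 <= p * sr ^ 2 * (1 + x)) by (repeat apply Rmult_le_pos; lra). nra.
Qed.

Lemma flux_boundary_vanishes x : 0 <= x ->
  is_lim_seq (fun n => INR n * pospow p (INR n) * flux x (x + INR n)) 0.
Proof.
  intros Hx. destruct (flux_boundary_bound x Hx) as [C HC].
  pose proof (is_lim_seq_scal_l _ C 0 (is_lim_Rpower_1_INR_neg be Hbe)) as L.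
  simpl in L. rewrite Rmult_0_r in L.
  apply (is_lim_seq_le_le (fun n => - (C * Rpower (1 + INR n) (- be))) _
           (fun n => C * Rpower (1 + INR n) (- be))).
  - intros n. apply Rabs_le_between, HC, pos_INR.
  - replace (Finite 0) with (Rbar_opp (Finite 0)) by (simpl; f_equal; ring).
    apply (is_lim_seq_opp _ 0). exact L.
  - exact L.
Qed.

Lemma weyl_kern_ode x : 0 <= x ->
  sigma2 x * weyl p kern2 x + ode_drift x * weyl p kern1 x - 2 * d * weyl p kern x = 0.
Proof.
  intros Hx.
  destruct kern_weyl_dominated as [K [_ [B0 [B1 [B2 _]]]]].
  pose proof continuous_kern_derivs as C.
  pose proof (fun F HF b (_ : 0 <= b) => ex_RInt_weyl_integrand p Hp F x b HF) as Ex.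
  pose proof (is_lim_RInt_lincomb _ _ _ _ (sigma2 x) 1
    (Ex kern2 (fun s => proj2 (proj2 (C s))))
    (fun b Hb => proj1 (RInt_lincomb _ _ 0 b (ode_drift x) (- (2 * d))
                          (Ex kern1 (fun s => proj1 (proj2 (C s))) b Hb)
                          (Ex kern (fun s => proj1 (C s)) b Hb)))
    (proj1 (weyl_cvg p be Hp Hbe K kern2 x (fun s => proj2 (proj2 (C s))) B2 Hx))
    (is_lim_RInt_lincomb _ _ _ _ (ode_drift x) (- (2 * d))
       (Ex kern1 (fun s => proj1 (proj2 (C s)))) (Ex kern (fun s => proj1 (C s)))
       (proj1 (weyl_cvg p be Hp Hbe K kern1 x (fun s => proj1 (proj2 (C s))) B1 Hx))
       (proj1 (weyl_cvg p be Hp Hbe K kern x (fun s => proj1 (C s)) B0 Hx)))) as L.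
  assert (L0 : is_lim_seq (fun n => RInt (fun u =>
      sigma2 x * (pospow p u * kern2 (x + u)) + 1 * (ode_drift x * (pospow p u * kern1 (x + u))
      + - (2 * d) * (pospow p u * kern (x + u)))) 0 (INR n)) 0).
  { apply (is_lim_seq_ext (fun n => INR n * pospow p (INR n) * flux x (x + INR n)));
      [|exact (flux_boundary_vanishes x Hx)].
    intros n. rewrite <- (RInt_ode_integrand x (INR n) (pos_INR n)).
    apply RInt_ext. intros u _. apply Rminus_diag_uniq. ring. }
  apply is_lim_seq_unique in L, L0. rewrite L0 in L. injection L. lra.
Qed.

Lemma weyl_kern_solution :
  solves (sx ^ 2) (sr ^ 2) c (mu + sr ^ 2 / 2) d (weyl p kern) (weyl p kern1) (weyl p kern2) /\
  (forall x, 0 <= x -> 0 < weyl p kern x) /\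
  (forall x y, 0 <= x <= y -> weyl p kern y <= weyl p kern x).
Proof.
  destruct kern_weyl_dominated as [K [HK [B0 [B1 [B2 B3]]]]].
  pose proof continuous_kern_derivs as C.
  pose proof is_derive_kern as D0. pose proof is_derive_kern1 as D1.
  pose proof is_derive_kern2 as D2.
  split; [|split].
  - intros x Hx. split; [|split].
    + exact (deriv_Rplus_weyl p be Hp Hbe K kern kern1 kern2 x HK D0 D1 B0 B1 B2 Hx).
    + exact (deriv_Rplus_weyl p be Hp Hbe K kern1 kern2 kern3 x HK D1 D2 B1 B2 B3 Hx).
    + pose proof (weyl_kern_ode x Hx) as E. unfold ode_lhs, ode_drift, sigma2 in *. lra.
  - intros x Hx.
    apply (weyl_pos p be Hp Hbe K); [intros s; apply C|apply kern_pos|exact B0|exact Hx].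
  - intros x y Hxy. apply (weyl_nonincreasing p be Hp Hbe K);
      [intros s; apply C|intros s; left; apply kern_pos|exact B0|exact Hxy].
Qed.

End Kernel.

Lemma exponent_choice b mu d : 0 < b -> 0 < d ->
  exists p, 0 < p /\ 0 < p * b + 2 * mu /\ b * p ^ 2 + 2 * mu * p = 2 * d.
Proof.
  intros Hb Hd. set (S := sqrt (mu ^ 2 + 2 * b * d)).
  assert (HS2 : S * S = mu ^ 2 + 2 * b * d)
    by (apply sqrt_sqrt; pose proof (pow2_ge_0 mu); pose proof (Rmult_lt_0_compat b d Hb Hd); lra).
  assert (HS0 : 0 <= S) by apply sqrt_pos.
  assert (HSmu : mu < S /\ - mu < S) by (pose proof (Rmult_lt_0_compat b d Hb Hd); split; nra).
  exists ((S - mu) / b). split; [|split].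
  - apply Rdiv_lt_0_compat; lra.
  - replace ((S - mu) / b * b + 2 * mu) with (S + mu) by (field; lra). lra.
  - apply Rmult_eq_reg_l with b; [|lra].
    replace (b * (b * ((S - mu) / b) ^ 2 + 2 * mu * ((S - mu) / b))) with (S * S - mu ^ 2)
      by (field; lra).
    rewrite HS2. ring.
Qed.

Theorem lemma3 (mu_xi mu_rho s_xi s_rho delta : R) :
  0 < s_xi -> 0 < s_rho -> 0 < delta ->
  exists f : R -> R,
    is_solution mu_xi mu_rho s_xi s_rho delta f /\ propP f /\
    (mu_rho <= 0 ->
      forall g : R -> R,
        is_solution mu_xi mu_rho s_xi s_rho delta g -> propP g ->
        exists K : R, 0 < K /\ forall x : R, 0 <= x -> g x = K * f x).
Proof.
  intros Hsx Hsr Hdelta.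
  assert (Hb : 0 < s_rho ^ 2) by (apply pow_lt; exact Hsr).
  destruct (exponent_choice (s_rho ^ 2) mu_rho delta Hb Hdelta) as [p [Hp [Hp_mu Hd]]].
  destruct (weyl_kern_solution s_xi s_rho mu_xi mu_rho p Hsx Hsr delta Hp Hp_mu Hd)
    as [Hsol [Hpos Hdec]].
  set (f := weyl p (kern s_xi s_rho mu_xi mu_rho p)) in *.
  exists f. split; [|split].
  - exact (ex_intro _ _ (ex_intro _ _ Hsol)).
  - split; [exact Hpos|]. intros x l Hx.
    apply deriv_Rplus_nonpos_of_nonincreasing; [exact Hx|intros y Hy; apply Hdec; lra].
  - intros _ g [g1 [g2 Hg]] HPg.
    pose proof (propP_bounded _ _ _ _ _ g g1 g2 Hg HPg) as Hgb.
    assert (Hf0 := Hpos 0 (Rle_refl 0)). assert (Hg0 := proj1 (Hgb 0 (Rle_refl 0))).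
    exists (g 0 / f 0). split; [apply Rdiv_lt_0_compat; assumption|].
    apply (bounded_solutions_proportional _ _ _ _ _ _ _ _ _ g1 g2 (f 0) (g 0)
             (pow_lt _ 2 Hsx) (Rlt_le _ _ Hb) Hdelta Hsol Hg); [lra| |].
    + intros x Hx. rewrite Rabs_right by (left; apply Hpos, Hx). apply Hdec. lra.
    + intros x Hx. specialize (Hgb x Hx). rewrite Rabs_right by lra. lra.
Qed.
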